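(* Consider the delayed online convex optimization setting described in the context, with a non-empty, closed, convex domain $\mathcal{X}\subseteq\mathbb{R}^n$. Let $\lambda>0$ and $G\ge 0$, and assume that each loss $f_t$ ($t\in[T]$) is $\lambda$-strongly convex with respect to the Euclidean norm, i.e. $f_t(y)\ge f_t(x)+\langle\nabla f_t(x),y-x\rangle+\frac{\lambda}{2}\|y-x\|_2^2$ for all $x,y\in\mathcal{X}$, and that $\max_{x\in\mathcal{X}}\|\nabla f_t(x)\|_2\le G$. Consider the learner (Delayed FTRL) that plays an arbitrary $x_1\in\mathcal{X}$ and, for each $t\ge 1$, after observing $g_\tau$ for all $\tau\in o_{t+1}\setminus o_t$, plays at round $t+1$ $$x_{t+1}\in\arg\min_{x\in\mathcal{X}}\ \sum_{\tau\in o_{t+1}}\langle g_\tau,x\rangle+\frac{\lambda}{2}\sum_{s=1}^{t}\|x-x_s\|_2^2 .$$ Then $$\mathrm{Reg}_T=\mathcal{O}\left(\frac{G^2}{\lambda}\left(\ln T+\min\left\{\sigma_{\max}\ln T,\sqrt{d_{\mathrm{tot}}}\right\}\right)\right),$$ i.e. there is an absolute numerical constant $C>0$ (independent of $T,n,\lambda,G$, the losses and the delays) such that for every $T\ge 2$, $\mathrm{Reg}_T\le C\,\frac{G^2}{\lambda}\left(\ln T+\min\{\sigma_{\max}\ln T,\sqrt{d_{\mathrm{tot}}}\}\right)$.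
   Context: Delayed OCO setting: $T\ge1$ and $n\ge1$ are integers, $[T]=\{1,\dots,T\}$. For each round $t\in[T]$ the learner chooses $x_t\in\mathcal{X}$ and incurs loss $f_t(x_t)$, where $f_t:\mathcal{X}\to\mathbb{R}$ is convex and differentiable (and may be chosen adversarially). The gradient $g_t=\nabla f_t(x_t)$ is revealed to the learner only at the end of round $t+d_t$, where $d_t\in\{0,1,2,\dots\}$ is an arbitrary delay unknown to the learner; it is assumed that $t+d_t\le T$ for all $t\in[T]$. For $t\ge 1$ define $o_t=\{\tau\in\mathbb{N}:\tau+d_\tau<t\}\subseteq[t-1]$ (rounds whose gradients are available before round $t$) and $m_t=[t-1]\setminus o_t$. Let $\sigma_{\max}=\max_{t\in[T]}|m_t|$, $d_{\max}=\max_{t\in[T]}d_t$, and $d_{\mathrm{tot}}=\sum_{t=1}^T d_t$. The regret against $u\in\mathcal{X}$ is $\mathrm{Reg}_T(u)=\sum_{t=1}^T(f_t(x_t)-f_t(u))$ and $\mathrm{Reg}_T=\sup_{u\in\mathcal{X}}\mathrm{Reg}_T(u)$. *)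

From HB Require Import structures.
From mathcomp Require Import all_boot all_order all_algebra.
From mathcomp Require Import all_classical all_reals all_analysis.
From mathcomp Require Import Rstruct Rstruct_topology.
From Stdlib Require Import Rdefinitions.
Set Implicit Arguments. Unset Strict Implicit. Unset Printing Implicit Defensive.
Import Order.TTheory GRing.Theory Num.Theory.
Import numFieldNormedType.Exports.
Local Open Scope ring_scope.
Local Open Scope classical_set_scope.

Notation R := Rdefinitions.R.

Definition dotp (n : nat) (a b : 'rV[R]_n) : R := \sum_(i < n) a ord0 i * b ord0 i.
Definition norm2 (n : nat) (a : 'rV[R]_n) : R := Num.sqrt (dotp a a).

Definition convex_set_in (n : nat) (X : set 'rV[R]_n) : Prop :=
  forall x y (a : R), X x -> X y -> 0 <= a -> a <= 1 ->
    X (a *: x + (1 - a) *: y).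

Definition is_gradient (n : nat) (f : 'rV[R]_n -> R^o) (x g : 'rV[R]_n) : Prop :=
  differentiable f x /\ forall v : 'rV[R]_n, ('d f x : 'rV[R]_n -> R^o) v = dotp g v.

Definition strongly_convex_on (n : nat) (X : set 'rV[R]_n) (lam : R)
  (f : 'rV[R]_n -> R) (grad : 'rV[R]_n -> 'rV[R]_n) : Prop :=
  forall x y, X x -> X y ->
    f x + dotp (grad x) (y - x) + lam / 2 * (norm2 (y - x)) ^+ 2 <= f y.

Definition convex_on (n : nat) (X : set 'rV[R]_n) (f : 'rV[R]_n -> R) : Prop :=
  forall x y (a : R), X x -> X y -> 0 <= a -> a <= 1 ->
    f (a *: x + (1 - a) *: y) <= a * f x + (1 - a) * f y.

Definition obs (d : nat -> nat) (t : nat) : seq nat :=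
  [seq tau <- iota 1 t.-1 | (ltn (addn tau (d tau)) t)].
Definition miss (d : nat -> nat) (t : nat) : seq nat :=
  [seq tau <- iota 1 t.-1 | ~~ (ltn (addn tau (d tau)) t)].
Definition sigma_max (T : nat) (d : nat -> nat) : nat :=
  (\max_(1 <= t < T.+1) size (miss d t))%N.
Definition d_tot (T : nat) (d : nat -> nat) : nat :=
  (\sum_(1 <= t < T.+1) d t)%N.

(* Delayed FTRL objective at the end of round t (defining x_{t+1}) *)
Definition ftrl_obj (n : nat) (d : nat -> nat) (lam : R)
  (g : nat -> 'rV[R]_n) (x : nat -> 'rV[R]_n) (t : nat) (y : 'rV[R]_n) : R :=
  \sum_(tau <- obs d t.+1) dotp (g tau) y
  + lam / 2 * \sum_(1 <= s < t.+1) (norm2 (y - x s)) ^+ 2.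

From HB Require Import structures.
From mathcomp Require Import all_boot all_order all_algebra.
From mathcomp Require Import all_classical all_reals all_analysis.
From mathcomp Require Import Rstruct Rstruct_topology.
From mathcomp Require Import ring lra zify.
Import Order.TTheory GRing.Theory Num.Theory.
Import numFieldNormedType.Exports.
Local Open Scope ring_scope.
Local Open Scope classical_set_scope.
Set Implicit Arguments. Unset Strict Implicit. Unset Printing Implicit Defensive.

(* Each loss is replaced by the surrogate h_t(y) = <g_t, y> + lam/2 |y - x_t|^2,
   whose regret dominates that of f_t by strong convexity.  Let z_t be an
   approximate minimiser of Phi_t = h_1 + ... + h_t; by the be-the-leader
   argument, sum_t h_t(z_t) is at most min Phi_T, so the regret is essentially
   sum_t (h_t(x_t) - h_t(z_t)) <= 3G sum_t |x_t - z_t|.  Now Phi_t is the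
   objective minimised by x_t plus the |m_t| linear terms with missing gradients
   plus h_t, all O(G)-Lipschitz on X (whose diameter is at most 2G/lam); as
   Phi_t is (lam t)-strongly convex, |x_t - z_t| = O(G/lam (1/t + min(1, |m_t|/t))).
   Finally sum_t min(1, |m_t|/t) is at most sigma_max sum_t 1/t, and also at
   most 2 sqrt(sum_t |m_t|) <= 2 sqrt(d_tot). *)

Section InnerProduct.
Variable n : nat.
Implicit Types a b c : 'rV[R]_n.

Lemma dotpC a b : dotp a b = dotp b a.
Proof. by apply: eq_bigr => i _; rewrite mulrC. Qed.

Lemma dotpDl a b c : dotp (a + b) c = dotp a c + dotp b c.
Proof. by rewrite /dotp -big_split; apply: eq_bigr => i _; rewrite !mxE mulrDl. Qed.

Lemma dotpZl k a c : dotp (k *: a) c = k * dotp a c.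
Proof. by rewrite /dotp mulr_sumr; apply: eq_bigr => i _; rewrite !mxE mulrA. Qed.

Lemma dotpNl a c : dotp (- a) c = - dotp a c.
Proof. by rewrite -scaleN1r dotpZl mulN1r. Qed.

Lemma dotpBl a b c : dotp (a - b) c = dotp a c - dotp b c.
Proof. by rewrite dotpDl dotpNl. Qed.

Lemma dotpDr a b c : dotp c (a + b) = dotp c a + dotp c b.
Proof. by rewrite dotpC dotpDl !(dotpC c). Qed.

Lemma dotpZr k a c : dotp c (k *: a) = k * dotp c a.
Proof. by rewrite dotpC dotpZl dotpC. Qed.

Lemma dotpNr a c : dotp c (- a) = - dotp c a.
Proof. by rewrite dotpC dotpNl dotpC. Qed.

Lemma dotpBr a b c : dotp c (a - b) = dotp c a - dotp c b.
Proof. by rewrite dotpDr dotpNr. Qed.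

Lemma dotpp_ge0 a : 0 <= dotp a a.
Proof. by apply: sumr_ge0 => i _; rewrite -expr2 sqr_ge0. Qed.

Lemma dotpp_eq0 a c : dotp a a = 0 -> dotp a c = 0.
Proof.
move=> aa0; have a0 i : a ord0 i = 0.
  apply/eqP; rewrite -sqrf_eq0 expr2; apply/eqP.
  by apply: (psumr_eq0P (P := xpredT) (F := fun i => a ord0 i * a ord0 i)) => // j _;
    rewrite -expr2 sqr_ge0.
by rewrite /dotp big1 // => i _; rewrite a0 mul0r.
Qed.

Lemma sqr_norm2 a : norm2 a ^+ 2 = dotp a a.
Proof. by rewrite sqr_sqrtr // dotpp_ge0. Qed.

Lemma norm2_ge0 a : 0 <= norm2 a.
Proof. exact: sqrtr_ge0. Qed.

Lemma norm2_0 : norm2 (0 : 'rV[R]_n) = 0.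
Proof. by rewrite -[0 in LHS](scale0r 0) /norm2 dotpZl mul0r sqrtr0. Qed.

Lemma norm2N a : norm2 (- a) = norm2 a.
Proof. by rewrite /norm2 dotpNl dotpNr opprK. Qed.

Lemma norm2_distC a b : norm2 (a - b) = norm2 (b - a).
Proof. by rewrite -norm2N opprB. Qed.

Lemma cauchy_schwarz a b : dotp a b <= norm2 a * norm2 b.
Proof.
set A := dotp a a; set B := dotp b b; set c := dotp a b.
have [c_le0|c_gt0] := lerP c 0.
  by apply: le_trans c_le0 _; apply: mulr_ge0; apply: norm2_ge0.
have c2_le : c ^+ 2 <= A * B.
  have [A0|A_neq0] := eqVneq A 0; first by move: c_gt0; rewrite /c dotpp_eq0 ?ltxx.
  have A_gt0 : 0 < A by rewrite lt_def A_neq0 dotpp_ge0.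
  (* 0 <= |A b - c a|^2 = A (A B - c^2) *)
  have := dotpp_ge0 (A *: b - c *: a).
  rewrite dotpBl !dotpBr !dotpZl !dotpZr -/A -/B -/c (dotpC b a) -/c => H.
  have : 0 <= A * (A * B - c ^+ 2) by move: H; rewrite expr2; nra.
  by rewrite pmulr_rge0 // subr_ge0.
rewrite -sqrtrM ?dotpp_ge0 // -(ger0_norm (ltW c_gt0)) -sqrtr_sqr ler_sqrt //.
by rewrite mulr_ge0 ?dotpp_ge0.
Qed.

Lemma dotp_le_norm2 a b G : norm2 a <= G -> dotp a b <= G * norm2 b.
Proof. by move=> aG; apply: le_trans (cauchy_schwarz a b) _; rewrite ler_wpM2r ?norm2_ge0. Qed.

End InnerProduct.

Section StrongConvexity.
Variable n : nat.
Implicit Types (x y z c g : 'rV[R]_n) (X : set 'rV[R]_n).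

(* written with [1 - 1/2] to match the shape of [convex_set_in] *)
Definition midpoint x y : 'rV[R]_n := (1 / 2 : R) *: x + (1 - 1 / 2) *: y.

Definition midpoint_strongly_convex (k : R) (Phi : 'rV[R]_n -> R) :=
  forall x y, Phi (midpoint x y) <= (Phi x + Phi y) / 2 - k / 8 * norm2 (x - y) ^+ 2.

Lemma midpoint_strongly_convex_sum (I : Type) (r : seq I) (k : I -> R)
    (Phi : I -> 'rV[R]_n -> R) :
  (forall i, midpoint_strongly_convex (k i) (Phi i)) ->
  midpoint_strongly_convex (\sum_(i <- r) k i) (fun y => \sum_(i <- r) Phi i y).
Proof.
move=> Phi_msc x y; elim: r => [|i r IHr]; first by rewrite !big_nil; lra.
rewrite !big_cons; have := Phi_msc i x y; lra.
Qed.

Lemma msc_approx_argmin X k Phi eps z y :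
  convex_set_in X -> midpoint_strongly_convex k Phi -> X z -> X y ->
  (forall w, X w -> Phi z <= Phi w + eps) ->
  Phi z + k / 4 * norm2 (y - z) ^+ 2 - 2 * eps <= Phi y.
Proof.
move=> cvX Phi_msc Xz Xy z_min.
have Xm : X (midpoint z y) by apply: cvX => //; lra.
have := z_min _ Xm.
by have := Phi_msc z y; rewrite norm2_distC; lra.
Qed.

Lemma msc_approx_argmin_perturbed X k F P eps x z :
  convex_set_in X -> midpoint_strongly_convex k (F \+ P) -> X x -> X z ->
  (forall y, X y -> F x <= F y) ->
  (forall w, X w -> F z + P z <= F w + P w + eps) ->
  k / 4 * norm2 (x - z) ^+ 2 <= P x - P z + 2 * eps.
Proof.
move=> cvX FP_msc Xx Xz x_min z_min.
have := msc_approx_argmin cvX FP_msc Xz Xx z_min; have := x_min z Xz; rewrite /=; lra.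
Qed.

Definition surrogate (lam : R) g c y : R := dotp g y + lam / 2 * norm2 (y - c) ^+ 2.

Lemma surrogate_msc lam g c : midpoint_strongly_convex lam (surrogate lam g c).
Proof.
move=> x y; rewrite /surrogate /midpoint.
have -> : (1 / 2 : R) *: x + (1 - 1 / 2) *: y - c = (1 / 2 : R) *: ((x - c) + (y - c)).
  by apply/rowP => i; rewrite !mxE; field.
have -> : x - y = (x - c) - (y - c) by apply/rowP => i; rewrite !mxE; ring.
rewrite !sqr_norm2; move: (x - c) (y - c) => p q.
rewrite !(dotpDl, dotpDr, dotpNl, dotpNr, dotpZl, dotpZr) (dotpC q p).
by lra.
Qed.

Lemma surrogate_lipschitz lam G D g c a b :
  0 <= lam -> norm2 g <= G -> norm2 (a - c) <= D -> norm2 (b - c) <= D ->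
  surrogate lam g c a - surrogate lam g c b <= (G + lam * D) * norm2 (a - b).
Proof.
move=> lam0 gG aD bD.
have shiftE p q : surrogate lam g c (p + c) - surrogate lam g c (q + c) =
    dotp g (p - q) + lam / 2 * (dotp p (p - q) + dotp q (p - q)).
  by rewrite /surrogate !addrK !sqr_norm2 !(dotpDr, dotpNr) (dotpC q p); ring.
have := shiftE (a - c) (b - c); rewrite !subrK.
have -> : a - c - (b - c) = a - b by rewrite opprB addrA subrK.
move=> ->.
have := dotp_le_norm2 (a - b) gG; have := dotp_le_norm2 (a - b) aD.
have := dotp_le_norm2 (a - b) bD; have := norm2_ge0 (a - b); nra.
Qed.

Lemma strongly_convex_sub_le_surrogate X lam f grad x u :
  strongly_convex_on X lam f grad -> X x -> X u ->
  f x - f u <= surrogate lam (grad x) x x - surrogate lam (grad x) x u.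
Proof.
move=> f_sc Xx Xu; have := f_sc x u Xx Xu.
by rewrite /surrogate subrr norm2_0 expr0n mulr0 addr0 dotpBr; lra.
Qed.

Lemma strongly_convex_diam X lam G f grad y z :
  0 < lam -> strongly_convex_on X lam f grad ->
  (forall w, X w -> norm2 (grad w) <= G) -> X y -> X z ->
  norm2 (y - z) <= 2 * G / lam.
Proof.
move=> lam0 f_sc gradG Xy Xz.
have := f_sc y z Xy Xz; have := f_sc z y Xz Xy.
have -> : z - y = - (y - z) by rewrite opprB.
rewrite dotpNr norm2N => sc_zy sc_yz.
have gy := dotp_le_norm2 (y - z) (gradG y Xy).
have gz : - dotp (grad z) (y - z) <= G * norm2 (y - z).
  by rewrite -dotpNl; apply: dotp_le_norm2; rewrite norm2N gradG.
set r := norm2 (y - z) in sc_zy sc_yz gy gz *.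
have r0 : 0 <= r := norm2_ge0 (y - z).
have G0 : 0 <= G := le_trans (norm2_ge0 _) (gradG y Xy).
rewrite ler_pdivlMr // mulrC.
have [->|r_neq0] := eqVneq r 0; first by rewrite mulr0; lra.
have r_gt0 : 0 < r by rewrite lt_def r_neq0 r0.
rewrite -(ler_pM2r r_gt0).
by rewrite expr2 in sc_zy sc_yz; nra.
Qed.

End StrongConvexity.

Section ApproxMinimizers.
Variable T : Type.
Implicit Types (X : set T) (Phi : T -> R).

Lemma exists_approx_argmin X Phi LB eps :
  (exists x0, X x0) -> (forall y, X y -> LB <= Phi y) -> 0 < eps ->
  exists2 z, X z & forall w, X w -> Phi z <= Phi w + eps.
Proof.
move=> [x0 Xx0] Phi_lb eps_gt0.
have Phi_inf : has_inf (Phi @` X).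
  by split; [exists (Phi x0), x0 | exists LB => _ [y Xy <-]; apply: Phi_lb].
have [_ [z Xz <-] z_lt] := inf_adherent eps_gt0 Phi_inf.
by exists z => // w Xw; have := ge_inf Phi_inf.2 (ex_intro2 _ _ w Xw erefl); lra.
Qed.

Lemma be_the_leader X (h : nat -> T -> R) (z : nat -> T) eps N :
  (forall t, X (z t)) ->
  (forall t, (t <= N)%N -> forall w, X w ->
     \sum_(1 <= s < t.+1) h s (z t) <= \sum_(1 <= s < t.+1) h s w + eps) ->
  forall u, X u ->
  \sum_(1 <= t < N.+1) h t (z t) <= \sum_(1 <= t < N.+1) h t u + N.+1%:R * eps.
Proof.
move=> Xz z_min u Xu.
have leader t : (t <= N)%N ->
    \sum_(1 <= s < t.+1) h s (z s) <= \sum_(1 <= s < t.+1) h s (z t) + t%:R * eps.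
  elim: t => [|t IHt] tN; first by rewrite !big_geq // mul0r addr0.
  rewrite -natr1 !(big_nat_recr t.+1 1) //=.
  by have := IHt (ltnW tN); have := z_min t (ltnW tN) (z t.+1) (Xz _); lra.
by have := leader N (leqnn N); have := z_min N (leqnn N) u Xu; rewrite -natr1; lra.
Qed.

End ApproxMinimizers.

Lemma sum_nat_itv_le (m N a b : nat) : (\sum_(m <= t < N) (a < t <= b) <= b - a)%N.
Proof.
suff : (\sum_(m <= t < N) (a < t <= b) <= minn N b.+1 - a.+1)%N by lia.
elim: N => [|N IHN]; first by rewrite big_geq.
have [mN|Nm] := leqP m N; last by rewrite big_geq.
by rewrite big_nat_recr //=; case: (boolP (a < N <= b)%N) => /= ab; move: IHN; lia.
Qed.

Section Delays.
Variable d : nat -> nat.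

Lemma mem_miss t tau : tau \in miss d t -> (0 < tau < t)%N.
Proof. by rewrite mem_filter mem_iota => /andP [_]; lia. Qed.

Lemma big_obs_miss t (F : nat -> R) :
  \sum_(tau <- obs d t) F tau + \sum_(tau <- miss d t) F tau = \sum_(1 <= tau < t) F tau.
Proof.
by rewrite /obs /miss !big_filter /index_iota subn1 [RHS](bigID (fun tau => tau + d tau < t)%N).
Qed.

Lemma size_miss t : size (miss d t) = (\sum_(1 <= tau < t | ~~ (tau + d tau < t)) 1)%N.
Proof. by rewrite -sum1_size big_filter /index_iota subn1. Qed.

Lemma sum_size_miss_le_d_tot T : (\sum_(1 <= t < T.+1) size (miss d t) <= d_tot T d)%N.
Proof.
have -> : (\sum_(1 <= t < T.+1) size (miss d t) =
    \sum_(1 <= t < T.+1) \sum_(1 <= tau < T.+1) (tau < t <= tau + d tau))%N.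
  apply: eq_big_nat => t /andP [_ tT].
  rewrite size_miss (big_nat_widen _ _ T.+1); last exact: ltnW.
  rewrite big_mkcond; apply: eq_bigr => tau _.
  by rewrite -leqNgt andbC; case: (_ && _).
rewrite exchange_big_nat /d_tot; apply: leq_sum => tau _.
by apply: leq_trans (sum_nat_itv_le _ _ _ _) _; rewrite addKn.
Qed.

Lemma size_miss_le_sigma_max T t : (1 <= t <= T)%N -> (size (miss d t) <= sigma_max T d)%N.
Proof.
move=> tT; apply: (leq_bigmax_seq (F := fun t => size (miss d t))) => //.
by rewrite mem_index_iota ltnS.
Qed.

End Delays.

Lemma le_of_sqr_le_affine (k c e r : R) : 0 < k -> 0 <= c -> 0 <= r -> 0 <= e ->
  k * r ^+ 2 <= c * r + k * e ^+ 2 -> r <= c / k + e.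
Proof.
move=> k_gt0 c0 r0 e0; rewrite -[c in c * r](mulfVK (lt0r_neq0 k_gt0)).
rewrite [c / k * k]mulrC -mulrA -mulrDr ler_pM2l //.
have : 0 <= c / k by rewrite divr_ge0 // ltW.
by move: (c / k) => a a0; rewrite !expr2 => ?; nra.
Qed.

Lemma le_min_ratio_bound (B t m r e : R) : 0 <= B -> 0 < t -> 0 <= m -> 0 <= e ->
  r <= 2 * B -> r <= 4 * (m + 3) * B / t + e ->
  r <= B * (12 / t + 4 * Order.min 1 (m / t)) + e.
Proof.
move=> B0 t_gt0 m0 e0 r_le2B r_le; rewrite minEle; case: ifP => _.
  have : 0 <= B * (12 / t) by rewrite mulr_ge0 ?divr_ge0 ?ler0n ?(ltW t_gt0).
  lra.
rewrite (_ : B * (12 / t + 4 * (m / t)) = 4 * (m + 3) * B / t) //.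
by field; rewrite gt_eqF.
Qed.

Lemma le_of_le_add_small (x y K : R) :
  0 <= K -> (forall dl, 0 < dl -> dl <= 1 -> x <= y + dl * K) -> x <= y.
Proof.
move=> K0 xy; apply/ler_addgt0Pr => e e_gt0.
pose dl := Order.min 1 (e / (K + 1)).
have dl_gt0 : 0 < dl by rewrite lt_min ltr01 divr_gt0 //; lra.
have dl_le1 : dl <= 1 by rewrite ge_min lexx.
have : dl <= e / (K + 1) by rewrite ge_min lexx orbT.
rewrite ler_pdivlMr; last lra.
by have := xy dl dl_gt0 dl_le1; nra.
Qed.

Lemma ln2_ge_half : 1 / 2 <= ln (2 : R).
Proof.
have : ln (1 + - 2^-1) <= - 2^-1 :> R.
  by apply: le_ln1Dx; rewrite ltrN2 invf_lt1 ?ltr1n.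
rewrite (_ : 1 + - 2^-1 = 2^-1 :> R) ?lnV ?posrE //; first by move=> ?; lra.
by lra.
Qed.

Lemma sum_inv_nat_le_1Dln N : (0 < N)%N ->
  \sum_(1 <= t < N.+1) (t%:R : R)^-1 <= 1 + ln N%:R.
Proof.
elim: N => [//|[|N] IHN] _; first by rewrite big_nat1 invr1 ln1 addr0.
have step : (N.+2%:R : R)^-1 <= ln N.+2%:R - ln N.+1%:R.
  have : ln (1 + - N.+2%:R^-1) <= - (N.+2%:R : R)^-1.
    by apply: le_ln1Dx; rewrite ltrN2 invf_lt1 ?ltr0n ?ltr1n.
  rewrite (_ : 1 + - N.+2%:R^-1 = N.+1%:R / N.+2%:R :> R) ?ln_div ?posrE ?ltr0n //.
    by move=> h; rewrite -opprB lerNr.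
  by rewrite -[N.+2%:R]natr1; field; rewrite gt_eqF // addr_gt0 ?ltr0n.
rewrite big_nat_recr //=; apply: le_trans (lerD (IHN isT) step) _.
by rewrite -addrA subrKC.
Qed.

Lemma sum_indicator_nat_le (k : R) N : 0 <= k ->
  \sum_(1 <= t < N.+1) (if t%:R <= k then 1 else 0 : R) <= k.
Proof.
move=> k0.
suff : \sum_(1 <= t < N.+1) (if t%:R <= k then 1 else 0 : R) <= Order.min N%:R k.
  by rewrite le_min => /andP [].
elim: N => [|N IHN]; first by rewrite big_geq // le_min lexx.
rewrite big_nat_recr //= le_min; move: IHN; rewrite le_min -natr1.
by case: ifP => Nk /andP [IH1 IH2]; apply/andP; split; lra.
Qed.

Lemma sum_min1_div_le N (m : nat -> R) s :
  (forall t, (1 <= t <= N)%N -> m t <= s) ->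
  \sum_(1 <= t < N.+1) Order.min 1 (m t / t%:R) <= s * \sum_(1 <= t < N.+1) (t%:R)^-1.
Proof.
move=> ms; rewrite mulr_sumr; apply: ler_sum_nat => t /andP [t1 tN].
by rewrite ge_min ler_wpM2r ?invr_ge0 ?ler0n ?orbT // ms // t1 -ltnS.
Qed.

Lemma sum_min1_div_le_sqrt N (m : nat -> R) D :
  (forall t, 0 <= m t) -> \sum_(1 <= t < N.+1) m t <= D ->
  \sum_(1 <= t < N.+1) Order.min 1 (m t / t%:R) <= 2 * Num.sqrt D.
Proof.
move=> m0 mD; have D0 : 0 <= D by apply: le_trans mD; apply: sumr_ge0.
set k := Num.sqrt D; have k0 : 0 <= k := sqrtr_ge0 D.
have Dk : D = k ^+ 2 by rewrite sqr_sqrtr.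
have [k_eq0|k_neq0] := eqVneq k 0.
  apply: (@le_trans _ _ D); last by rewrite Dk k_eq0 expr0n mulr0.
  apply: le_trans mD.
  apply: ler_sum_nat => t /andP [t1 _]; rewrite ge_min; apply/orP; right.
  by rewrite ler_pdivrMr ?ltr0n // ler_peMr ?m0 ?ler1n.
have k_gt0 : 0 < k by rewrite lt_def k_neq0 k0.
(* with k = sqrt D, round t contributes at most 1 if t <= k, and m t / k otherwise *)
apply: (@le_trans _ _ (\sum_(1 <= t < N.+1) ((if t%:R <= k then 1 else 0) + m t / k))).
  apply: ler_sum_nat => t /andP [t1 _]; have t_gt0 : 0 < (t%:R : R) by rewrite ltr0n.
  case: ifP => tk; rewrite ge_min; apply/orP; [left | right].
    by rewrite lerDl divr_ge0.
  by rewrite add0r ler_wpM2l // lef_pV2 ?posrE // ltW // ltNge tk.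
rewrite big_split /= -mulr_suml; have := sum_indicator_nat_le N k0.
have : (\sum_(1 <= t < N.+1) m t) / k <= k by rewrite ler_pdivrMr // -expr2 -Dk.
lra.
Qed.

(* Unfolding [ftrl_obj] directly exposes Stdlib's [Rplus] and [Rmult], which
   [ring] does not recognise; this restates it with the ring operations. *)
Lemma ftrl_objE n d lam (g x : nat -> 'rV[R]_n) t y :
  ftrl_obj d lam g x t y = \sum_(tau <- obs d t.+1) dotp (g tau) y
    + lam / 2 * \sum_(1 <= s < t.+1) norm2 (y - x s) ^+ 2.
Proof. by []. Qed.

Section DelayedFTRL.
Variables (n T : nat) (X : set 'rV[R]_n) (lam G : R).
Variables (f : nat -> 'rV[R]_n -> R) (grad : nat -> 'rV[R]_n -> 'rV[R]_n).
Variables (d : nat -> nat) (x : nat -> 'rV[R]_n) (x0 : 'rV[R]_n).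

Let g tau := grad tau (x tau).
Let h t : 'rV[R]_n -> R := surrogate lam (g t) (x t).
Let Phi t y : R := \sum_(1 <= s < t.+1) h s y.

Hypotheses (T_gt0 : (0 < T)%N) (Xx0 : X x0) (cvX : convex_set_in X) (lam_gt0 : 0 < lam).
Hypothesis f_sc : forall t, (1 <= t <= T)%N -> strongly_convex_on X lam (f t) (grad t).
Hypothesis grad_le : forall t, (1 <= t <= T)%N -> forall y, X y -> norm2 (grad t y) <= G.
Hypothesis Xx1 : X (x 1%N).
Hypothesis x_ftrl : forall t, (1 <= t < T)%N ->
  X (x t.+1) /\ forall y, X y -> ftrl_obj d lam g x t (x t.+1) <= ftrl_obj d lam g x t y.

Let T1 : (1 <= 1 <= T)%N. Proof. by rewrite leqnn T_gt0. Qed.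

Lemma mem_x t : (1 <= t <= T)%N -> X (x t).
Proof.
case: t => [|[|t]] // tT.
by have /x_ftrl[] : (1 <= t.+1 < T)%N by lia.
Qed.

Lemma grad_x_le t : (1 <= t <= T)%N -> norm2 (g t) <= G.
Proof. by move=> tT; apply/grad_le/mem_x. Qed.

Lemma G_ge0 : 0 <= G.
Proof. exact: le_trans (norm2_ge0 _) (grad_le T1 Xx0). Qed.

Lemma diam_le y z : X y -> X z -> norm2 (y - z) <= 2 * G / lam.
Proof. exact: strongly_convex_diam lam_gt0 (f_sc T1) (grad_le T1). Qed.

Lemma surrogate_x_lipschitz t a b : (1 <= t <= T)%N -> X a -> X b ->
  h t a - h t b <= 3 * G * norm2 (a - b).
Proof.
move=> tT Xa Xb; have Xxt := mem_x tT.
have := surrogate_lipschitz (ltW lam_gt0) (grad_x_le tT) (diam_le Xa Xxt) (diam_le Xb Xxt).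
by rewrite (_ : G + lam * (2 * G / lam) = 3 * G) //; field; rewrite gt_eqF.
Qed.

Lemma regret_le_surrogate u : X u ->
  \sum_(1 <= t < T.+1) (f t (x t) - f t u) <= \sum_(1 <= t < T.+1) (h t (x t) - h t u).
Proof.
move=> Xu; apply: ler_sum_nat => t; rewrite ltnS => tT.
exact: strongly_convex_sub_le_surrogate (f_sc tT) (mem_x tT) Xu.
Qed.

Lemma Phi_lbound t : exists LB, forall y, X y -> LB <= Phi t y.
Proof.
exists (\sum_(1 <= s < t.+1) (dotp (g s) x0 - norm2 (g s) * (2 * G / lam))) => y Xy.
apply: ler_sum_nat => s _.
have := cauchy_schwarz (g s) (x0 - y).
have : norm2 (g s) * norm2 (x0 - y) <= norm2 (g s) * (2 * G / lam).
  by rewrite ler_wpM2l ?norm2_ge0 ?diam_le.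
have : 0 <= lam / 2 * norm2 (y - x s) ^+ 2 by rewrite mulr_ge0 ?sqr_ge0 ?divr_ge0 ?ltW.
by rewrite /h /surrogate dotpBr; lra.
Qed.

Lemma Phi_msc t : midpoint_strongly_convex (lam * t%:R) (Phi t).
Proof.
have := midpoint_strongly_convex_sum (index_iota 1 t.+1)
  (fun s => surrogate_msc lam (g s) (x s)).
by rewrite sumr_const_nat subSS subn0 mulr_natr.
Qed.

Lemma Phi_ftrl_decomp t y : (0 < t)%N ->
  Phi t y = ftrl_obj d lam g x t.-1 y + (\sum_(tau <- miss d t) dotp (g tau) y + h t y).
Proof.
case: t => // t _; rewrite ftrl_objE /Phi big_nat_recr //= {1}/h /surrogate.
by rewrite big_split /= -mulr_sumr -(big_obs_miss d t.+1); ring.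
Qed.

Lemma x_ftrl_min t : (1 <= t <= T)%N -> forall y, X y ->
  ftrl_obj d lam g x t.-1 (x t) <= ftrl_obj d lam g x t.-1 y.
Proof.
case: t => [|[|t]] // tT y Xy; first by rewrite /ftrl_obj /obs /= !big_nil.
by have /x_ftrl[_ ->] : (1 <= t.+1 < T)%N by lia.
Qed.

Lemma miss_variation_le t a b : (t <= T.+1)%N ->
  \sum_(tau <- miss d t) dotp (g tau) a - \sum_(tau <- miss d t) dotp (g tau) b
  <= (size (miss d t))%:R * G * norm2 (a - b).
Proof.
move=> tT; rewrite -sumrB -mulrA.
have -> : (size (miss d t))%:R * (G * norm2 (a - b)) =
    \sum_(tau <- miss d t) G * norm2 (a - b).
  by rewrite big_const_seq count_predT iter_addr addr0 mulr_natl.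
rewrite big_seq_cond [X in _ <= X]big_seq_cond; apply: ler_sum => tau /andP [miss_tau _].
rewrite -dotpBr; apply: dotp_le_norm2; apply: grad_x_le.
by move: (mem_miss miss_tau); lia.
Qed.

Section Leaders.
Variables (dl : R) (z : nat -> 'rV[R]_n).
Hypotheses (dl_gt0 : 0 < dl) (dl_le1 : dl <= 1) (Xz : forall t, X (z t)).
(* the accuracy is chosen so that the distance bound below is off by exactly [dl] *)
Hypothesis z_min : forall t w, X w -> Phi t (z t) <= Phi t w + lam * dl ^+ 2 / 8.

Lemma dist_x_leader_sqr t : (1 <= t <= T)%N ->
  lam * t%:R / 4 * norm2 (x t - z t) ^+ 2
  <= ((size (miss d t))%:R + 3) * G * norm2 (x t - z t) + lam * t%:R / 4 * dl ^+ 2.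
Proof.
move=> tT; have t_gt0 : (0 < t)%N by case/andP: tT.
pose P y := \sum_(tau <- miss d t) dotp (g tau) y + h t y.
have decomp y : Phi t y = ftrl_obj d lam g x t.-1 y + P y by rewrite Phi_ftrl_decomp.
have := @msc_approx_argmin_perturbed _ X (lam * t%:R) (ftrl_obj d lam g x t.-1) P
  (lam * dl ^+ 2 / 8) (x t) (z t) cvX _ (mem_x tT) (Xz t) (x_ftrl_min tT).
move=> /(_ _ _)/le_trans; apply.
- by move=> a b /=; rewrite -!decomp; apply: Phi_msc.
- by move=> w Xw; rewrite -!decomp; apply: z_min.
have := miss_variation_le (x t) (z t) (leqW (proj2 (andP tT))).
have := surrogate_x_lipschitz tT (mem_x tT) (Xz t).
have : lam * dl ^+ 2 <= lam * t%:R * dl ^+ 2.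
  by rewrite -mulrA ler_wpM2l ?(ltW lam_gt0) // ler_peMl ?sqr_ge0 ?ler1n.
by rewrite /P; lra.
Qed.

Lemma dist_x_leader t : (1 <= t <= T)%N ->
  norm2 (x t - z t)
  <= G / lam * (12 / t%:R + 4 * Order.min 1 ((size (miss d t))%:R / t%:R)) + dl.
Proof.
move=> tT; have t_gt0 : 0 < t%:R :> R by rewrite ltr0n; case/andP: tT.
have k_gt0 : 0 < lam * t%:R / 4 by rewrite divr_gt0 ?mulr_gt0 // ltr0n.
have c0 : 0 <= ((size (miss d t))%:R + 3) * G by rewrite mulr_ge0 ?addr_ge0 ?ler0n ?G_ge0.
have := le_of_sqr_le_affine k_gt0 c0 (norm2_ge0 _) (ltW dl_gt0) (dist_x_leader_sqr tT).
rewrite (_ : _ / (lam * t%:R / 4) = 4 * ((size (miss d t))%:R + 3) * (G / lam) / t%:R).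
  have B0 : 0 <= G / lam by rewrite divr_ge0 ?G_ge0 // ltW.
  move=> /(le_min_ratio_bound B0 t_gt0 (ler0n _ _) (ltW dl_gt0)); apply.
  by rewrite mulrA; apply: diam_le; [apply: mem_x | apply: Xz].
by field; rewrite !gt_eqF.
Qed.

Lemma regret_le_leaders u : X u ->
  \sum_(1 <= t < T.+1) (f t (x t) - f t u)
  <= G ^+ 2 / lam * (36 * \sum_(1 <= t < T.+1) (t%:R : R)^-1
       + 12 * \sum_(1 <= t < T.+1) Order.min 1 ((size (miss d t))%:R / t%:R))
     + dl * (3 * G * T%:R + (T%:R + 1) * lam).
Proof.
move=> Xu; apply: le_trans (regret_le_surrogate Xu) _.
have leader := be_the_leader (N := T) Xz (fun t _ => z_min t) Xu.
have per_round : \sum_(1 <= t < T.+1) (h t (x t) - h t (z t)) <= \sum_(1 <= t < T.+1)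
    (3 * G * (G / lam * (12 / t%:R + 4 * Order.min 1 ((size (miss d t))%:R / t%:R)) + dl)).
  apply: ler_sum_nat => t; rewrite ltnS => tT.
  apply: le_trans (surrogate_x_lipschitz tT (mem_x tT) (Xz t)) _.
  by rewrite ler_wpM2l ?dist_x_leader // mulr_ge0 ?G_ge0 ?ler0n.
have -> : \sum_(1 <= t < T.+1) (h t (x t) - h t u) =
    \sum_(1 <= t < T.+1) (h t (x t) - h t (z t))
    + (\sum_(1 <= t < T.+1) h t (z t) - \sum_(1 <= t < T.+1) h t u).
  by rewrite !sumrB addrA subrK.
have rounds_sum : \sum_(1 <= t < T.+1)
    (3 * G * (G / lam * (12 / t%:R + 4 * Order.min 1 ((size (miss d t))%:R / t%:R)) + dl))
    = G ^+ 2 / lam * (36 * \sum_(1 <= t < T.+1) (t%:R : R)^-1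
       + 12 * \sum_(1 <= t < T.+1) Order.min 1 ((size (miss d t))%:R / t%:R))
      + 3 * G * dl * T%:R.
  rewrite (eq_bigr (fun t => 36 * (G ^+ 2 / lam) * t%:R^-1
      + 12 * (G ^+ 2 / lam) * Order.min 1 ((size (miss d t))%:R / t%:R) + 3 * G * dl)).
    by rewrite !big_split /= -!mulr_sumr sumr_const_nat subSS subn0 mulr_natr; ring.
  by move=> t _; rewrite expr2; ring.
have eps_le : T.+1%:R * (lam * dl ^+ 2 / 8) <= dl * ((T%:R + 1) * lam).
  have K0 : 0 <= (T%:R + 1) * lam by rewrite mulr_ge0 ?addr_ge0 ?ler0n ?ler01 ?(ltW lam_gt0).
  have : dl ^+ 2 / 8 <= dl by have := dl_gt0; have := dl_le1; rewrite expr2; nra.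
  by move/(ler_wpM2l K0); rewrite -natr1; lra.
lra.
Qed.

End Leaders.

Lemma delayed_ftrl_regret u : X u ->
  \sum_(1 <= t < T.+1) (f t (x t) - f t u)
  <= G ^+ 2 / lam * (36 * \sum_(1 <= t < T.+1) (t%:R : R)^-1
       + 12 * \sum_(1 <= t < T.+1) Order.min 1 ((size (miss d t))%:R / t%:R)).
Proof.
move=> Xu; apply: (le_of_le_add_small (K := 3 * G * T%:R + (T%:R + 1) * lam)).
  by rewrite addr_ge0 ?mulr_ge0 ?addr_ge0 ?ler0n ?ler01 ?G_ge0 ?(ltW lam_gt0).
move=> dl dl_gt0 dl_le1.
have eps_gt0 : 0 < lam * dl ^+ 2 / 8 by rewrite divr_gt0 ?mulr_gt0 ?exprn_gt0 ?ltr0n.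
have leaders t : exists z, X z /\ forall w, X w -> Phi t z <= Phi t w + lam * dl ^+ 2 / 8.
  have [LB LB_le] := Phi_lbound t.
  by have [z Xz z_min] := exists_approx_argmin (ex_intro _ x0 Xx0) LB_le eps_gt0; exists z.
have [z z_spec] := choice leaders.
exact (regret_le_leaders dl_gt0 dl_le1 (fun t => (z_spec t).1) (fun t => (z_spec t).2) Xu).
Qed.

End DelayedFTRL.

Lemma harmonic_miss_sum_le T d : (2 <= T)%N ->
  36 * \sum_(1 <= t < T.+1) (t%:R : R)^-1
    + 12 * \sum_(1 <= t < T.+1) Order.min 1 ((size (miss d t))%:R / t%:R)
  <= 108 * (ln T%:R + Order.min ((sigma_max T d)%:R * ln T%:R) (Num.sqrt (d_tot T d)%:R)).
Proof.
move=> T2.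
have lnT : 1 / 2 <= ln T%:R :> R.
  apply: le_trans ln2_ge_half _.
  by rewrite ler_ln ?posrE ?ltr0n ?ler_nat //; apply: leq_trans T2.
have H_le : \sum_(1 <= t < T.+1) (t%:R : R)^-1 <= 3 * ln T%:R.
  by have := sum_inv_nat_le_1Dln (ltnW T2); lra.
have M_sigma : \sum_(1 <= t < T.+1) Order.min 1 ((size (miss d t))%:R / t%:R)
    <= (sigma_max T d)%:R * (3 * ln T%:R) :> R.
  have sigma_le t : (1 <= t <= T)%N -> (size (miss d t))%:R <= (sigma_max T d)%:R :> R.
    by move=> tT; rewrite ler_nat size_miss_le_sigma_max.
  apply: le_trans (sum_min1_div_le (m := fun t => (size (miss d t))%:R) sigma_le) _.
  by rewrite ler_wpM2l ?ler0n.
have M_sqrt : \sum_(1 <= t < T.+1) Order.min 1 ((size (miss d t))%:R / t%:R)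
    <= 2 * Num.sqrt (d_tot T d)%:R :> R.
  apply: sum_min1_div_le_sqrt => [t|]; first exact: ler0n.
  by rewrite -natr_sum ler_nat sum_size_miss_le_d_tot.
move: H_le M_sigma M_sqrt lnT (sqrtr_ge0 ((d_tot T d)%:R : R)) (ler0n R (sigma_max T d)).
move: (\sum_(1 <= t < T.+1) _) (\sum_(1 <= t < T.+1) _) (ln _) ((sigma_max T d)%:R : R)
  (Num.sqrt _) => H M L s q H_le M_s M_q L_ge q0 s0.
rewrite minEle; case: ifP => _; last lra.
have : 0 <= s * L by rewrite mulr_ge0 //; lra.
lra.
Qed.

Theorem theorem3p1 :
  exists C : R, 0 < C /\
  forall (n T : nat) (X : set 'rV[R]_n) (lam G : R)
    (f : nat -> 'rV[R]_n -> R) (grad : nat -> 'rV[R]_n -> 'rV[R]_n)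
    (d : nat -> nat) (x : nat -> 'rV[R]_n),
    (1 <= n)%N -> (2 <= T)%N ->
    (exists x0, X x0) -> closed X -> convex_set_in X ->
    0 < lam -> 0 <= G ->
    (* losses: convex, differentiable on X with gradient grad t,
       lam-strongly convex, gradients bounded by G on X *)
    (forall t, (1 <= t <= T)%N -> convex_on X (f t)) ->
    (forall t, (1 <= t <= T)%N -> forall y, X y -> is_gradient (f t) y (grad t y)) ->
    (forall t, (1 <= t <= T)%N -> strongly_convex_on X lam (f t) (grad t)) ->
    (forall t, (1 <= t <= T)%N -> forall y, X y -> norm2 (grad t y) <= G) ->
    (* delays *)
    (forall t, (1 <= t <= T)%N -> (t + d t <= T)%N) ->
    (* Delayed FTRL: x_1 in X arbitrary; x_{t+1} minimises the objective over X *)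
    X (x 1%N) ->
    (forall t, (1 <= t < T)%N ->
       X (x t.+1) /\
       forall y, X y ->
         ftrl_obj d lam (fun tau => grad tau (x tau)) x t (x t.+1)
         <= ftrl_obj d lam (fun tau => grad tau (x tau)) x t y) ->
    (* regret bound against every comparator u in X *)
    forall u, X u ->
      \sum_(1 <= t < T.+1) (f t (x t) - f t u)
      <= C * (G ^+ 2 / lam) *
         (ln (T%:R) + Order.min ((sigma_max T d)%:R * ln (T%:R))
                                (Num.sqrt ((d_tot T d)%:R))).
Proof.
exists 108; split=> [|n T X lam G f grad d x _ T2 [x0 Xx0] _ cvX lam_gt0 _ _ _ f_sc grad_le _
  Xx1 x_ftrl u Xu]; first by rewrite ltr0n.
apply: le_trans (delayed_ftrl_regret (ltnW T2) Xx0 cvX lam_gt0 f_sc grad_le Xx1 x_ftrl Xu) _.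
rewrite [X in _ <= X]mulrAC [X in _ <= X]mulrC.
by apply: ler_wpM2l; [rewrite divr_ge0 ?sqr_ge0 // ltW | exact: harmonic_miss_sum_le].
Qed.
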